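(* Let $\mathbb{K}$ be a field of characteristic $0$. Suppose $\mathcal{A}$ is a $2n$-dimensional Poincaré CDGA over $\mathbb{K}$ with trivial differential, and let $\omega\in\mathcal{A}^{2n}$ be the dual of the Poincaré class. Assume that $\mathcal{A}^i=0$ whenever $i<0$ or $i$ is odd, and that $\mathcal{A}^0=\mathbb{K}$. Let $\theta$ be a new element of degree $2n-1$ and $\mathcal{A}_\theta=\mathcal{A}\otimes\Lambda\theta$ with $d\theta=\omega$. If $\mathcal{A}_\theta$ is formal, then the multiplication map $\mathcal{A}^i\otimes\mathcal{A}^j\to\mathcal{A}^{i+j}$ is injective for all $i,j\le n$.
   Context: A finite-dimensional graded commutative algebra $H$ is $n$-dimensional Poincaré if there exists $\alpha_H\in(H^n)^\vee$ (the Poincaré class) such that $H^i\to(H^{n-i})^\vee$, $x\mapsto(y\mapsto\alpha_H(xy))$, is an isomorphism for all $i$; a CDGA is Poincaré if its cohomology is. The dual of the Poincaré class is the top-degree element $\omega$ with $\alpha_H(\omega)=1$. $\mathcal{A}_\theta=\{x+\theta y:x,y\in\mathcal{A}\}$ ($\theta^2=0$). A CDGA is formal if it is connected to its cohomology by a zigzag of quasi-isomorphisms. *)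

From HB Require Import structures.
From mathcomp Require Import all_boot all_order all_algebra.
Set Implicit Arguments. Unset Strict Implicit. Unset Printing Implicit Defensive.
Import Order.TTheory GRing.Theory Num.Theory.
Local Open Scope ring_scope.

(* The total space is a K-vector space [carrier]; the grading is given by
   the family of projections [proj i] onto the degree-i components. *)
Record cdga_data (K : fieldType) := CdgaData {
  carrier :> lmodType K;
  cmul : carrier -> carrier -> carrier;
  cone : carrier;
  proj : int -> carrier -> carrier;
  cd : carrier -> carrier
}.

Arguments cmul {K} _ _ _.
Arguments cone {K} _.
Arguments proj {K} _ _ _.
Arguments cd {K} _ _.

Section CDGA.
Variable K : fieldType.

Definition homog (A : cdga_data K) (i : int) (x : A) := proj A i x = x.

Definition lin_map (U V : lmodType K) (f : U -> V) :=
  forall (a : K) (x y : U), f (a *: x + y) = a *: f x + f y.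

Definition lin_functional (U : lmodType K) (f : U -> K) :=
  forall (a : K) (x y : U), f (a *: x + y) = a * f x + f y.

Definition gsign (i j : int) : K := (-1) ^+ (absz (i * j)).

Definition is_cdga (A : cdga_data K) : Prop :=
  [/\
      [/\ (forall i, lin_map (proj A i)),
          (forall i j x, proj A i (proj A j x) = if i == j then proj A j x else 0)
        & (forall x : A, exists2 s : seq int, uniq s & x = \sum_(i <- s) proj A i x)],
      [/\ (forall a x y z, cmul A (a *: x + y) z = a *: cmul A x z + cmul A y z)
          /\ (forall a x y z, cmul A z (a *: x + y) = a *: cmul A z x + cmul A z y),
          (forall x y z, cmul A (cmul A x y) z = cmul A x (cmul A y z)),
          (forall x, cmul A (cone A) x = x /\ cmul A x (cone A) = x),
          homog 0 (cone A)
        & (forall i j x y, homog i x -> homog j y -> homog (i + j) (cmul A x y))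
          /\
          (forall i j x y, homog i x -> homog j y ->
             cmul A x y = gsign i j *: cmul A y x)]
    &
      [/\ lin_map (cd A),
          (forall i x, homog i x -> homog (i + 1) (cd A x)),
          (forall x, cd A (cd A x) = 0)
        & (forall i x y, homog i x ->
             cd A (cmul A x y) = cmul A (cd A x) y + gsign i 1 *: cmul A x (cd A y))]].

Definition is_cdga_morph (A B : cdga_data K) (f : A -> B) : Prop :=
  [/\ lin_map f, f (cone A) = cone B,
      (forall x y, f (cmul A x y) = cmul B (f x) (f y)),
      (forall i x, f (proj A i x) = proj B i (f x))
    & (forall x, f (cd A x) = cd B (f x))].

(* f induces an isomorphism H^i(A) -> H^i(B) in every degree i. *)
Definition is_quasi_iso (A B : cdga_data K) (f : A -> B) : Prop :=
  [/\ is_cdga A, is_cdga B, is_cdga_morph f,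
      (forall i (z : B), homog i z -> cd B z = 0 ->
         exists w : A, exists b : B,
           [/\ homog i w, cd A w = 0, homog (i - 1) b & f w - z = cd B b])
    &
      (forall i (w : A) (b : B), homog i w -> cd A w = 0 -> homog (i - 1) b ->
         f w = cd B b -> exists a : A, homog (i - 1) a /\ w = cd A a)].

Inductive zigzag : cdga_data K -> cdga_data K -> Prop :=
| zz_refl A : zigzag A A
| zz_fwd (A B C : cdga_data K) (f : A -> B) :
    is_quasi_iso f -> zigzag B C -> zigzag A C
| zz_bwd (A B C : cdga_data K) (f : B -> A) :
    is_quasi_iso f -> zigzag B C -> zigzag A C.

(* Formality: A is connected by a zigzag of quasi-isomorphisms to a CDGA
   with zero differential (which is then necessarily isomorphic to H(A)). *)
Definition formal (A : cdga_data K) : Prop :=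
  exists H : cdga_data K,
    [/\ is_cdga H, (forall x, cd H x = 0) & zigzag A H].

Definition finite_dim (A : cdga_data K) : Prop :=
  exists s : seq A, forall x : A,
    exists c : nat -> K, x = \sum_(k < size s) c k *: s`_k.

(* A (a graded algebra, here equal to its cohomology) is N-dimensional
   Poincare with Poincare class alpha. *)
Definition poincare (A : cdga_data K) (N : int) (alpha : A -> K) : Prop :=
  [/\ finite_dim A, lin_functional alpha &
      forall i : int,
        (forall x : A, homog i x ->
           (forall y : A, homog (N - i) y -> alpha (cmul A x y) = 0) -> x = 0)
        /\ (forall phi : A -> K, lin_functional phi ->
              exists2 x : A, homog i x &
                forall y : A, homog (N - i) y -> phi y = alpha (cmul A x y))].

(* A_theta = A (x) Lambda(theta), |theta| = 2n-1, d theta = omega.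
   Element (x, y) stands for x + theta y.  Since A is concentrated in even
   degrees (standing hypothesis), theta commutes with A and theta^2 = 0. *)
Definition Atheta_data (A : cdga_data K) (n : nat) (omega : A) : cdga_data K :=
  @CdgaData K ((A : lmodType K) * (A : lmodType K))%type
    (fun u v => (cmul A u.1 v.1, cmul A u.1 v.2 + cmul A u.2 v.1))
    (cone A, 0)
    (fun k u => (proj A k u.1, proj A (k - ((2 * n)%:Z - 1)) u.2))
    (fun u => (cd A u.1 + cmul A omega u.2, - cd A u.2)).

Definition deg_basis (A : cdga_data K) (i : int) (p : nat) (e : 'I_p -> A) :=
  [/\ forall k, homog i (e k),
      forall c : 'I_p -> K, \sum_k c k *: e k = 0 -> forall k, c k = 0
    & forall x : A, homog i x -> exists c : 'I_p -> K, x = \sum_k c k *: e k].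

(* The multiplication map A^i (x) A^j -> A^{i+j} is injective; an element of
   A^i (x) A^j is written in coordinates M w.r.t. bases e of A^i, f of A^j. *)
Definition mul_tensor_injective (A : cdga_data K) (i j : int) : Prop :=
  forall (p q : nat) (e : 'I_p -> A) (f : 'I_q -> A),
    deg_basis i e -> deg_basis j f ->
    forall M : 'M[K]_(p, q),
      \sum_k \sum_l M k l *: cmul A (e k) (f l) = 0 -> M = 0.

End CDGA.

Arguments poincare {K} A N alpha.
Arguments Atheta_data {K} A n omega.
Arguments formal {K} A.
Arguments mul_tensor_injective {K} A i j.
Arguments is_cdga {K} A.

(* Formality is detected by matric Massey products: a product <a, b, c> that is
   defined but contains no coboundary is transported along quasi-isomorphisms in
   both directions, and cannot exist when the differential is zero.
   Let sum_k e_k (x) b_k in A^i (x) A^j be a nonzero element killed by the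
   multiplication, with (e_k) free, and use Poincare duality to pick g in A^(2n-j)
   with alpha (b_k0 g) <> 0.  In A_theta, sum_k e_k b_k = 0 and
   b_k g = alpha (b_k g) omega = d (theta alpha (b_k g)), so <e, b, g> is defined.
   For degree reasons every defining system (u, v) has v_k = theta alpha (b_k g)
   modulo A and u free of theta, so its value has theta-component
   sum_k alpha (b_k g) e_k <> 0, whereas coboundaries of A_theta have none. *)

From HB Require Import structures.
From mathcomp Require Import all_boot all_order all_algebra.
From mathcomp Require Import ring zify.
From Stdlib Require Import Classical FunctionalExtensionality.
Import Order.TTheory GRing.Theory Num.Theory.
Local Open Scope ring_scope.
Set Implicit Arguments. Unset Strict Implicit. Unset Printing Implicit Defensive.

Section Signs.
Variable K : fieldType.

Lemma gsign1E (i : int) : gsign K i 1 = (-1) ^ i.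
Proof. by rewrite /gsign mulr1; case: i => n //=; rewrite NegzE -exprnN invr_sign. Qed.

Lemma gsign1D (i j : int) : gsign K (i + j) 1 = gsign K i 1 * gsign K j 1.
Proof. by rewrite !gsign1E exprzDr // unitrN1. Qed.

Lemma gsign1B1 (i : int) : gsign K (i - 1) 1 = - gsign K i 1.
Proof. by rewrite gsign1D /gsign /= expr1 mulrN1. Qed.

Lemma gsign1_sq (i : int) : gsign K i 1 * gsign K i 1 = 1.
Proof. by rewrite /gsign mulr1 -exprD addnn -mul2n exprM sqrrN !expr1n. Qed.

End Signs.

Section LinMap.
Variables (K : fieldType) (U V : lmodType K) (f : U -> V) (f_lin : lin_map f).

Lemma lin_map0 : f 0 = 0.
Proof.
by have := f_lin 1 0 0; rewrite !scale1r !addr0 => /eqP; rewrite addrC -subr_eq subrr => /eqP.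
Qed.

Lemma lin_mapD x y : f (x + y) = f x + f y.
Proof. by have := f_lin 1 x y; rewrite !scale1r. Qed.

Lemma lin_mapZ a x : f (a *: x) = a *: f x.
Proof. by have := f_lin a x 0; rewrite !addr0 lin_map0 addr0. Qed.

Lemma lin_mapB x y : f (x - y) = f x - f y.
Proof. by rewrite lin_mapD -scaleN1r lin_mapZ scaleN1r. Qed.

Lemma lin_map_sum (I : Type) (r : seq I) (P : pred I) (F : I -> U) :
  f (\sum_(i <- r | P i) F i) = \sum_(i <- r | P i) f (F i).
Proof. exact: (big_morph f lin_mapD lin_map0). Qed.

End LinMap.

Section LinFunctional.
Variables (K : fieldType) (U : lmodType K) (phi : U -> K) (phi_lin : lin_functional phi).

Let phi_map : lin_map (V := K^o) phi := phi_lin.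

Lemma lin_functional0 : phi 0 = 0. Proof. exact: (lin_map0 phi_map). Qed.
Lemma lin_functionalZ a x : phi (a *: x) = a * phi x. Proof. exact: (lin_mapZ phi_map a x). Qed.
Lemma lin_functionalB x y : phi (x - y) = phi x - phi y. Proof. exact: (lin_mapB phi_map x y). Qed.

End LinFunctional.

Section CdgaTheory.
Variables (K : fieldType) (C : cdga_data K) (HC : is_cdga C).

Lemma cmulA x y z : cmul C (cmul C x y) z = cmul C x (cmul C y z).
Proof. by case: HC => _ [_ ->]. Qed.

Lemma cmul1r x : cmul C x (cone C) = x.
Proof. by case: HC => _ [_ _ /(_ x) []]. Qed.

Lemma homog_cone : homog 0 (cone C).
Proof. by case: HC => _ []. Qed.

Lemma homogM i j (x y : C) : homog i x -> homog j y -> homog (i + j) (cmul C x y).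
Proof. by case: HC => _ [_ _ _ _ [hM _]] _; apply: hM. Qed.

Lemma homog_cd i (x : C) : homog i x -> homog (i + 1) (cd C x).
Proof. by case: HC => _ _ [_ hd _ _]; apply: hd. Qed.

Lemma cdK x : cd C (cd C x) = 0.
Proof. by case: HC => _ _ []. Qed.

Lemma cd_cmul i (x y : C) : homog i x ->
  cd C (cmul C x y) = cmul C (cd C x) y + gsign K i 1 *: cmul C x (cd C y).
Proof. by case: HC => _ _ [_ _ _ hL]; apply: hL. Qed.

Let proj_lin i : lin_map (proj C i). Proof. by case: HC => [[]]. Qed.
Let cd_lin : lin_map (cd C). Proof. by case: HC => _ _ []. Qed.
Let cmul_linl z : lin_map (cmul C ^~ z). Proof. by case: HC => _ [[hl _] _ _ _ _] _ a x y; apply: hl. Qed.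
Let cmul_linr z : lin_map (cmul C z). Proof. by case: HC => _ [[_ hr] _ _ _ _] _ a x y; apply: hr. Qed.

Lemma cmul0l z : cmul C 0 z = 0. Proof. exact: lin_map0 (cmul_linl z). Qed.
Lemma cmul0r z : cmul C z 0 = 0. Proof. exact: lin_map0 (cmul_linr z). Qed.
Lemma cmulDl x y z : cmul C (x + y) z = cmul C x z + cmul C y z.
Proof. exact: lin_mapD (cmul_linl z) x y. Qed.
Lemma cmulDr x y z : cmul C z (x + y) = cmul C z x + cmul C z y.
Proof. exact: lin_mapD (cmul_linr z) x y. Qed.
Lemma cmulBl x y z : cmul C (x - y) z = cmul C x z - cmul C y z.
Proof. exact: lin_mapB (cmul_linl z) x y. Qed.
Lemma cmulBr x y z : cmul C z (x - y) = cmul C z x - cmul C z y.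
Proof. exact: lin_mapB (cmul_linr z) x y. Qed.
Lemma cmulZl a x z : cmul C (a *: x) z = a *: cmul C x z.
Proof. exact: lin_mapZ (cmul_linl z) a x. Qed.
Lemma cmulZr a x z : cmul C z (a *: x) = a *: cmul C z x.
Proof. exact: lin_mapZ (cmul_linr z) a x. Qed.
Lemma cmul_suml (I : Type) (r : seq I) (P : pred I) (F : I -> C) z :
  cmul C (\sum_(i <- r | P i) F i) z = \sum_(i <- r | P i) cmul C (F i) z.
Proof. exact (lin_map_sum (cmul_linl z) r P F). Qed.
Lemma cmul_sumr (I : Type) (r : seq I) (P : pred I) (F : I -> C) z :
  cmul C z (\sum_(i <- r | P i) F i) = \sum_(i <- r | P i) cmul C z (F i).
Proof. exact (lin_map_sum (cmul_linr z) r P F). Qed.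

Lemma cd0 : cd C 0 = 0. Proof. exact: lin_map0 cd_lin. Qed.
Lemma cdD x y : cd C (x + y) = cd C x + cd C y. Proof. exact: lin_mapD cd_lin x y. Qed.
Lemma cdB x y : cd C (x - y) = cd C x - cd C y. Proof. exact: lin_mapB cd_lin x y. Qed.
Lemma cdZ a x : cd C (a *: x) = a *: cd C x. Proof. exact: lin_mapZ cd_lin a x. Qed.
Lemma cd_sum (I : Type) (r : seq I) (P : pred I) (F : I -> C) :
  cd C (\sum_(i <- r | P i) F i) = \sum_(i <- r | P i) cd C (F i).
Proof. exact (lin_map_sum cd_lin r P F). Qed.

Lemma homog0 i : homog i (0 : C). Proof. exact: lin_map0 (proj_lin i). Qed.
Lemma homogD i (x y : C) : homog i x -> homog i y -> homog i (x + y).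
Proof. by rewrite /homog (lin_mapD (proj_lin i)) => -> ->. Qed.
Lemma homogB i (x y : C) : homog i x -> homog i y -> homog i (x - y).
Proof. by rewrite /homog (lin_mapB (proj_lin i)) => -> ->. Qed.
Lemma homogZ i a (x : C) : homog i x -> homog i (a *: x).
Proof. by rewrite /homog (lin_mapZ (proj_lin i)) => ->. Qed.
Lemma homog_sum i (I : Type) (r : seq I) (P : pred I) (F : I -> C) :
  (forall k, homog i (F k)) -> homog i (\sum_(k <- r | P k) F k).
Proof. by move=> hF; elim/big_rec: _ => [|k x _]; [exact: homog0 | exact: homogD]. Qed.

Lemma eq_homog i i' (x : C) : i = i' -> homog i x -> homog i' x.
Proof. by move=> ->. Qed.

Lemma homogM_eq i j k (x y : C) : homog i x -> homog j y -> i + j = k -> homog k (cmul C x y).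
Proof. by move=> hx hy <-; apply: homogM. Qed.

End CdgaTheory.

Section Cohomology.
Variable K : fieldType.

Definition cocycle (C : cdga_data K) (k : int) (x : C) := homog k x /\ cd C x = 0.

Definition coboundary (C : cdga_data K) (k : int) (x : C) :=
  exists2 z : C, homog (k - 1) z & x = cd C z.

Variables (C : cdga_data K) (HC : is_cdga C).

Lemma coboundary_cd k (z : C) : homog (k - 1) z -> coboundary k (cd C z).
Proof. by exists z. Qed.

Lemma coboundaryD k (x y : C) : coboundary k x -> coboundary k y -> coboundary k (x + y).
Proof.
by move=> [zx hx ->] [zy hy ->]; exists (zx + zy); rewrite ?cdD //; apply: (homogD HC).
Qed.

Lemma coboundaryB k (x y : C) : coboundary k x -> coboundary k y -> coboundary k (x - y).
Proof.
by move=> [zx hx ->] [zy hy ->]; exists (zx - zy); rewrite ?cdB //; apply: (homogB HC).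
Qed.

Lemma coboundary_sum k (I : Type) (r : seq I) (P : pred I) (F : I -> C) :
  (forall i, coboundary k (F i)) -> coboundary k (\sum_(i <- r | P i) F i).
Proof.
move=> hF; elim/big_rec: _ => [|i x _]; last exact: coboundaryD.
by exists 0; rewrite ?cd0 //; apply: (homog0 HC).
Qed.

Lemma coboundary_cocycle k (x : C) : coboundary k x -> cocycle k x.
Proof.
move=> [z hz ->]; split; last exact: cdK.
by apply: eq_homog (homog_cd HC hz); rewrite subrK.
Qed.

Lemma cocycle_add_cd k (x z : C) : cocycle k x -> homog (k - 1) z -> cocycle k (x + cd C z).
Proof.
move=> [hx dx] hz; have [hdz ddz] := coboundary_cocycle (coboundary_cd hz).
by split; [apply: (homogD HC) | rewrite cdD // dx ddz addr0].
Qed.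

Lemma cocycleM p q (x y : C) : cocycle p x -> cocycle q y -> cocycle (p + q) (cmul C x y).
Proof.
move=> [hx dx] [hy dy]; split; first exact: (homogM HC).
by rewrite (cd_cmul HC _ hx) dx dy cmul0l // cmul0r // scaler0 addr0.
Qed.

Lemma cd_cmul_cocyclel p (x y : C) : cocycle p x ->
  cd C (cmul C x y) = gsign K p 1 *: cmul C x (cd C y).
Proof. by move=> [hx dx]; rewrite (cd_cmul HC _ hx) dx cmul0l // add0r. Qed.

Lemma cd_cmul_cocycler p (x y : C) : homog p x -> cd C y = 0 ->
  cd C (cmul C x y) = cmul C (cd C x) y.
Proof. by move=> hx dy; rewrite (cd_cmul HC _ hx) dy cmul0r // scaler0 addr0. Qed.

Lemma cmul_cohomologous p q (x al y be : C) :
  cocycle p x -> cocycle q y -> homog (p - 1) al -> homog (q - 1) be ->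
  coboundary (p + q) (cmul C (x + cd C al) (y + cd C be) - cmul C x y).
Proof.
move=> hx hy hal hbe.
have [hy' dy'] := cocycle_add_cd hy hbe.
have -> : cmul C (x + cd C al) (y + cd C be) - cmul C x y =
    cd C (cmul C al (y + cd C be) + gsign K p 1 *: cmul C x be).
  rewrite cdD // cdZ // (cd_cmul_cocycler hal dy') (cd_cmul_cocyclel _ hx).
  rewrite scalerA gsign1_sq scale1r cmulDl // cmulDr //.
  by rewrite addrC -!addrA addKr addrC.
apply/coboundary_cd/(homogD HC); last apply: (homogZ HC).
  by apply: (homogM_eq HC hal hy'); ring.
by apply: (homogM_eq HC hx.1 hbe); ring.
Qed.

Lemma coboundary_cohomologous k (x y : C) :
  coboundary k x -> coboundary k (y - x) -> coboundary k y.
Proof. by move=> hx hyx; rewrite -(subrKC x y); apply: coboundaryD. Qed.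

Lemma cocycle_sum k (I : Type) (r : seq I) (P : pred I) (F : I -> C) :
  (forall i, cocycle k (F i)) -> cocycle k (\sum_(i <- r | P i) F i).
Proof.
move=> hF; split; first by apply: (homog_sum HC) => i; case: (hF i).
by rewrite cd_sum // big1 // => i _; case: (hF i).
Qed.

End Cohomology.

Section Massey.
Variable K : fieldType.
Implicit Types C : cdga_data K.

(* Matric Massey products <a, b, c>, with a a row and b a column of p classes. *)
Definition massey_system C (i j m : int) p (a b : 'I_p -> C) (c u : C) (v : 'I_p -> C) :=
  [/\ homog (i + j - 1) u, cd C u = \sum_k cmul C (a k) (b k),
      forall k, homog (j + m - 1) (v k) & forall k, cd C (v k) = cmul C (b k) c].

Definition massey_value C (i : int) p (a : 'I_p -> C) (c u : C) (v : 'I_p -> C) :=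
  \sum_k cmul C (a k) (v k) - gsign K i 1 *: cmul C u c.

Definition massey_vanishes C (i j m : int) p (a b : 'I_p -> C) (c : C) :=
  exists u v, massey_system i j m a b c u v /\
              coboundary (i + j + m - 1) (massey_value i a c u v).

Definition massey_defined C (i j m : int) p (a b : 'I_p -> C) (c : C) :=
  [/\ forall k, cocycle i (a k), forall k, cocycle j (b k), cocycle m c,
      coboundary (i + j) (\sum_k cmul C (a k) (b k))
    & forall k, coboundary (j + m) (cmul C (b k) c)].

Definition has_nonvanishing_massey C (i j m : int) (p : nat) :=
  exists (a b : 'I_p -> C) (c : C),
    massey_defined i j m a b c /\ ~ massey_vanishes i j m a b c.

Variables (C : cdga_data K) (HC : is_cdga C).

Lemma massey_value_cocycle i j m p (a b v : 'I_p -> C) (c u : C) :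
  (forall k, cocycle i (a k)) -> cocycle m c -> massey_system i j m a b c u v ->
  cocycle (i + j + m - 1) (massey_value i a c u v).
Proof.
move=> ha [hc dc] [hu du hv dv]; split.
  apply: (homogB HC).
    by apply: (homog_sum HC) => k; apply: (homogM_eq HC (ha k).1 (hv k)); ring.
  by apply/(homogZ HC)/(homogM_eq HC hu hc); ring.
rewrite cdB // cdZ // cd_sum // (cd_cmul_cocycler HC hu dc) du cmul_suml //.
rewrite scaler_sumr -sumrB; apply: big1 => k _.
by rewrite (cd_cmul_cocyclel HC _ (ha k)) dv cmulA // subrr.
Qed.

Lemma massey_vanishes_shiftl i j m p (a b al : 'I_p -> C) (c : C) :
  (forall k, cocycle j (b k)) -> (forall k, homog (i - 1) (al k)) ->
  massey_vanishes i j m (fun k => a k + cd C (al k)) b c -> massey_vanishes i j m a b c.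
Proof.
move=> hb hal [u [v [[hu du hv dv] hval]]].
exists (u - \sum_k cmul C (al k) (b k)), v; split; first split => //.
- apply: (homogB HC hu); apply: (homog_sum HC) => k.
  by apply: (homogM_eq HC (hal k) (hb k).1); ring.
- rewrite cdB // du cd_sum // -sumrB; apply: eq_bigr => k _.
  by rewrite (cd_cmul_cocycler HC (hal k) (hb k).2) cmulDl // addrK.
have -> : massey_value i a c (u - \sum_k cmul C (al k) (b k)) v =
    massey_value i (fun k => a k + cd C (al k)) c u v - cd C (\sum_k cmul C (al k) (v k)).
  rewrite /massey_value cd_sum //.
  under [in RHS]eq_bigr do rewrite cmulDl //.
  under [X in _ = _ - X]eq_bigr do rewrite (cd_cmul HC _ (hal _)) dv gsign1B1 scaleNr -cmulA //.
  rewrite big_split sumrB cmulBl // cmul_suml // scalerBr scaler_sumr.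
  by rewrite opprB -!addrA; congr (_ + _); rewrite opprB addrCA subrKC addrC.
apply: (coboundaryB HC hval); apply: coboundary_cd; apply: (homog_sum HC) => k.
by apply: (homogM_eq HC (hal k) (hv k)); ring.
Qed.

Lemma massey_vanishes_shiftm i j m p (a b be : 'I_p -> C) (c : C) :
  (forall k, cocycle i (a k)) -> cocycle m c -> (forall k, homog (j - 1) (be k)) ->
  massey_vanishes i j m a (fun k => b k + cd C (be k)) c -> massey_vanishes i j m a b c.
Proof.
move=> ha [hc dc] hbe [u [v [[hu du hv dv] hval]]].
exists (u - gsign K i 1 *: \sum_k cmul C (a k) (be k)), (fun k => v k - cmul C (be k) c).
split; first split.
- apply: (homogB HC hu); apply/(homogZ HC)/(homog_sum HC) => k.
  by apply: (homogM_eq HC (ha k).1 (hbe k)); ring.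
- rewrite cdB // cdZ // cd_sum // du scaler_sumr -sumrB; apply: eq_bigr => k _.
  by rewrite (cd_cmul_cocyclel HC _ (ha k)) scalerA gsign1_sq scale1r cmulDr // addrK.
- by move=> k; apply: (homogB HC (hv k)); apply: (homogM_eq HC (hbe k) hc); ring.
- by move=> k; rewrite cdB // dv (cd_cmul_cocycler HC (hbe k) dc) cmulDl // addrK.
suff -> : massey_value i a c (u - gsign K i 1 *: \sum_k cmul C (a k) (be k))
    (fun k => v k - cmul C (be k) c) = massey_value i a c u v by [].
rewrite /massey_value cmulBl // cmulZl // cmul_suml // scalerBr scalerA gsign1_sq scale1r.
under eq_bigr do rewrite cmulBr // -cmulA //.
by rewrite sumrB opprB addrA subrK.
Qed.

Lemma massey_vanishes_shiftr i j m p (a b : 'I_p -> C) (c ga : C) :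
  (forall k, cocycle i (a k)) -> (forall k, cocycle j (b k)) -> homog (m - 1) ga ->
  massey_vanishes i j m a b (c + cd C ga) -> massey_vanishes i j m a b c.
Proof.
move=> ha hb hga [u [v [[hu du hv dv] hval]]].
exists u, (fun k => v k - gsign K j 1 *: cmul C (b k) ga); split; first split => //.
- move=> k; apply/(homogB HC (hv k))/(homogZ HC).
  by apply: (homogM_eq HC (hb k).1 hga); ring.
- move=> k; rewrite cdB // dv cdZ // (cd_cmul_cocyclel HC _ (hb k)) scalerA gsign1_sq.
  by rewrite scale1r cmulDr // addrK.
have -> : massey_value i a c u (fun k => v k - gsign K j 1 *: cmul C (b k) ga) =
    massey_value i a (c + cd C ga) u v - cd C (gsign K j 1 *: cmul C u ga).
  rewrite /massey_value cdZ // (cd_cmul HC _ hu) du cmul_suml // scalerDr scalerA.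
  rewrite gsign1B1 gsign1D mulrN mulrCA gsign1_sq mulr1 scaleNr cmulDr // scalerDr.
  under eq_bigr do rewrite cmulBr // cmulZr // -cmulA //.
  by rewrite sumrB -scaler_sumr opprB opprD !addrA subrK addrAC.
apply: (coboundaryB HC hval); apply/coboundary_cd/(homogZ HC).
by apply: (homogM_eq HC hu hga); ring.
Qed.

Lemma massey_vanishes_cohomologous i j m p (a b al be : 'I_p -> C) (c ga : C) :
  (forall k, cocycle i (a k)) -> (forall k, cocycle j (b k)) -> cocycle m c ->
  (forall k, homog (i - 1) (al k)) -> (forall k, homog (j - 1) (be k)) -> homog (m - 1) ga ->
  massey_vanishes i j m (fun k => a k + cd C (al k)) (fun k => b k + cd C (be k)) (c + cd C ga) ->
  massey_vanishes i j m a b c.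
Proof.
move=> ha hb hc hal hbe hga hvan.
have ha' k := cocycle_add_cd HC (ha k) (hal k).
have hb' k := cocycle_add_cd HC (hb k) (hbe k).
apply: (massey_vanishes_shiftl hb hal); apply: (massey_vanishes_shiftm ha' hc hbe).
exact: (massey_vanishes_shiftr ha' hb' hga).
Qed.

Lemma massey_value_shift i p (a : 'I_p -> C) (c u be : C) (v bv : 'I_p -> C) l :
  (forall k, cocycle i (a k)) -> cd C c = 0 -> homog l be ->
  massey_value i a c (u + cd C be) (fun k => v k + cd C (bv k)) =
  massey_value i a c u v +
  cd C (gsign K i 1 *: (\sum_k cmul C (a k) (bv k) - cmul C be c)).
Proof.
move=> ha dc hbe; rewrite /massey_value cdZ // cdB // cd_sum //.
rewrite (cd_cmul_cocycler HC hbe dc) cmulDl // scalerBr scaler_sumr.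
under eq_bigr do rewrite cmulDr //.
under [X in _ = _ + (X - _)]eq_bigr do rewrite (cd_cmul_cocyclel HC _ (ha _)) scalerA gsign1_sq scale1r.
by rewrite big_split scalerDr opprD addrACA.
Qed.

End Massey.

Section Morphism.
Variables (K : fieldType) (C D : cdga_data K) (f : C -> D) (Hf : is_cdga_morph f).

Let f_lin : lin_map f. Proof. by case: Hf. Qed.

Lemma morph_cmul x y : f (cmul C x y) = cmul D (f x) (f y). Proof. by case: Hf. Qed.
Lemma morph_cd x : f (cd C x) = cd D (f x). Proof. by case: Hf. Qed.
Lemma morph_homog i x : homog i x -> homog i (f x).
Proof. by case: Hf => _ _ _ hproj _; rewrite /homog -hproj => ->. Qed.

Lemma morph_cocycle k x : cocycle k x -> cocycle k (f x).
Proof.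
by move=> [hx dx]; split; [exact: morph_homog | rewrite -morph_cd dx (lin_map0 f_lin)].
Qed.

Lemma morph_coboundary k x : coboundary k x -> coboundary k (f x).
Proof. by move=> [z hz ->]; exists (f z); [exact: morph_homog | rewrite morph_cd]. Qed.

Lemma morph_massey_value i p (a v : 'I_p -> C) (c u : C) :
  f (massey_value i a c u v) =
  massey_value i (fun k => f (a k)) (f c) (f u) (fun k => f (v k)).
Proof.
rewrite /massey_value (lin_mapB f_lin) (lin_mapZ f_lin) (lin_map_sum f_lin) morph_cmul.
by congr (_ - _); apply: eq_bigr => k _; rewrite morph_cmul.
Qed.

Lemma morph_massey_vanishes i j m p (a b : 'I_p -> C) (c : C) :
  massey_vanishes i j m a b c ->
  massey_vanishes i j m (fun k => f (a k)) (fun k => f (b k)) (f c).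
Proof.
move=> [u [v [[hu du hv dv] hval]]]; exists (f u), (fun k => f (v k)); split.
  split=> [|||k].
  - exact: morph_homog.
  - rewrite -morph_cd du (lin_map_sum f_lin).
    by apply: eq_bigr => k _; rewrite morph_cmul.
  - by move=> k; apply: morph_homog.
  - by rewrite -morph_cd dv morph_cmul.
by rewrite -morph_massey_value; apply: morph_coboundary.
Qed.

Lemma morph_massey_defined i j m p (a b : 'I_p -> C) (c : C) :
  massey_defined i j m a b c ->
  massey_defined i j m (fun k => f (a k)) (fun k => f (b k)) (f c).
Proof.
move=> [ha hb hc hab hbc]; split=> [k|k|||k].
- exact: morph_cocycle.
- exact: morph_cocycle.
- exact: morph_cocycle.
- rewrite -(eq_bigr _ (fun k _ => morph_cmul _ _)) -(lin_map_sum f_lin).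
  exact: morph_coboundary.
- by rewrite -morph_cmul; apply: morph_coboundary.
Qed.

End Morphism.

Section QuasiIso.
Variables (K : fieldType) (C D : cdga_data K) (f : C -> D) (Hq : is_quasi_iso f).

Let HC : is_cdga C. Proof. by case: Hq. Qed.
Let HD : is_cdga D. Proof. by case: Hq. Qed.
Let Hf : is_cdga_morph f. Proof. by case: Hq. Qed.
Let f_lin : lin_map f. Proof. by case: Hf. Qed.

Lemma quasi_iso_lift_cocycle k (z : D) : cocycle k z ->
  exists w be, [/\ cocycle k w, homog (k - 1) be & f w = z + cd D be].
Proof.
case: Hq => _ _ _ hsurj _ [hz dz].
have [w [be [hw dw hbe ew]]] := hsurj k z hz dz.
by exists w, be; split=> //; rewrite -ew subrKC.
Qed.

Lemma quasi_iso_reflect_coboundary k (w : C) :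
  cocycle k w -> coboundary k (f w) -> coboundary k w.
Proof.
case: Hq => _ _ _ _ hinj [hw dw] [z hz ez].
by have [a [ha ->]] := hinj k w z hw dw hz ez; exists a.
Qed.

Lemma quasi_iso_reflect_massey_vanishes i j m p (a b : 'I_p -> C) (c : C) :
  massey_defined i j m a b c ->
  massey_vanishes i j m (fun k => f (a k)) (fun k => f (b k)) (f c) ->
  massey_vanishes i j m a b c.
Proof.
move=> [ha _ hc [u0 hu0 du0] hbc] [U [V [[hU dU hV dV] hval]]].
have hfa k := morph_cocycle Hf (ha k).
have /fin_all_exists[v0 hv0] k : exists v, homog (j + m - 1) v /\ cmul C (b k) c = cd C v.
  by have [v hv ev] := hbc k; exists v.
have [w [be [hw hbe ew]]] : exists w be, [/\ cocycle (i + j - 1) w,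
    homog (i + j - 1 - 1) be & f w = U - f u0 + cd D be].
  apply: quasi_iso_lift_cocycle; split; first exact: (homogB HD hU (morph_homog Hf hu0)).
  rewrite cdB // dU -(morph_cd Hf) -du0 (lin_map_sum f_lin) -sumrB.
  by rewrite big1 // => k _; rewrite (morph_cmul Hf) subrr.
have /fin_all_exists[wv /fin_all_exists[bv hwv]] k : exists wv bv,
    [/\ cocycle (j + m - 1) wv, homog (j + m - 1 - 1) bv & f wv = V k - f (v0 k) + cd D bv].
  apply: quasi_iso_lift_cocycle; split.
    exact: (homogB HD (hV k) (morph_homog Hf (hv0 k).1)).
  by rewrite cdB // dV -(morph_cd Hf) -(hv0 k).2 (morph_cmul Hf) subrr.
have hsys : massey_system i j m a b c (u0 + w) (fun k => v0 k + wv k).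
  split=> [|||k].
  - exact: (homogD HC hu0 hw.1).
  - by rewrite cdD // hw.2 addr0 du0.
  - by move=> k; have [[hwvk _] _ _] := hwv k; exact: (homogD HC (hv0 k).1 hwvk).
  - by rewrite cdD //; have [[_ ->] _ _] := hwv k; rewrite addr0 (hv0 k).2.
exists (u0 + w), (fun k => v0 k + wv k); split=> //.
apply: quasi_iso_reflect_coboundary; first exact: (massey_value_cocycle HC ha hc hsys).
rewrite (morph_massey_value Hf) (lin_mapD f_lin) ew addrA subrKC.
have -> : (fun k => f (v0 k + wv k)) = (fun k => V k + cd D (bv k)).
  apply: functional_extensionality => k.
  by rewrite (lin_mapD f_lin); have [_ _ ->] := hwv k; rewrite addrA subrKC.
rewrite (massey_value_shift HD U V bv hfa (morph_cocycle Hf hc).2 hbe).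
apply: (coboundaryD HD hval); apply/coboundary_cd/(homogZ HD)/(homogB HD).
  apply: (homog_sum HD) => k; have [_ hbv _] := hwv k.
  by apply: (homogM_eq HD (hfa k).1 hbv); ring.
by apply: (homogM_eq HD hbe (morph_homog Hf hc.1)); ring.
Qed.

Lemma quasi_iso_has_nonvanishing_massey i j m p :
  has_nonvanishing_massey C i j m p -> has_nonvanishing_massey D i j m p.
Proof.
move=> [a [b [c [hdef hnv]]]].
exists (fun k => f (a k)), (fun k => f (b k)), (f c); split.
  exact: (morph_massey_defined Hf).
by move/(quasi_iso_reflect_massey_vanishes hdef).
Qed.

Lemma quasi_iso_has_nonvanishing_massey_inv i j m p :
  has_nonvanishing_massey D i j m p -> has_nonvanishing_massey C i j m p.
Proof.
move=> [a [b [c [[ha hb hc hab hbc] hnv]]]].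
have /fin_all_exists[a' /fin_all_exists[al hal]] k := quasi_iso_lift_cocycle (ha k).
have /fin_all_exists[b' /fin_all_exists[be hbe]] k := quasi_iso_lift_cocycle (hb k).
have [c' [ga [hc' hga ec]]] := quasi_iso_lift_cocycle hc.
have ha' k : cocycle i (a' k) by case: (hal k).
have hb' k : cocycle j (b' k) by case: (hbe k).
have hal' k : homog (i - 1) (al k) by case: (hal k).
have hbe' k : homog (j - 1) (be k) by case: (hbe k).
have ea : (fun k => f (a' k)) = (fun k => a k + cd D (al k)).
  by apply: functional_extensionality => k; case: (hal k).
have eb : (fun k => f (b' k)) = (fun k => b k + cd D (be k)).
  by apply: functional_extensionality => k; case: (hbe k).
exists a', b', c'; split.
  split=> // [|k].
  - apply: quasi_iso_reflect_coboundary; first by apply: (cocycle_sum HC) => k; apply: (cocycleM HC).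
    rewrite (lin_map_sum f_lin); apply: (coboundary_cohomologous HD hab).
    rewrite -sumrB; apply: (coboundary_sum HD) => k.
    have -> : f (cmul C (a' k) (b' k)) = cmul D (a k + cd D (al k)) (b k + cd D (be k)).
      by rewrite (morph_cmul Hf); case: (hal k) => _ _ ->; case: (hbe k) => _ _ ->.
    exact: (cmul_cohomologous HD (ha k) (hb k)).
  - apply: quasi_iso_reflect_coboundary; first exact: (cocycleM HC).
    apply: (coboundary_cohomologous HD (hbc k)).
    rewrite (morph_cmul Hf) ec; case: (hbe k) => _ _ ->.
    exact: (cmul_cohomologous HD (hb k) hc).
move=> /(morph_massey_vanishes Hf); rewrite ea eb ec => hvan; apply: hnv.
exact: (massey_vanishes_cohomologous HD ha hb hc hal' hbe' hga).
Qed.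

End QuasiIso.

Lemma zigzag_has_nonvanishing_massey (K : fieldType) (X Y : cdga_data K) i j m p :
  zigzag X Y -> has_nonvanishing_massey X i j m p -> has_nonvanishing_massey Y i j m p.
Proof.
elim=> [//|A B C f hf _ IH|A B C f hf _ IH] hA; apply: IH.
  exact: (quasi_iso_has_nonvanishing_massey hf).
exact: (quasi_iso_has_nonvanishing_massey_inv hf).
Qed.

Lemma zero_differential_massey_vanishes (K : fieldType) (H : cdga_data K) i j m p
    (a b : 'I_p -> H) (c : H) :
  is_cdga H -> (forall x, cd H x = 0) ->
  massey_defined i j m a b c -> massey_vanishes i j m a b c.
Proof.
move=> HH dH [_ _ _ [z _ hab] hbc].
exists 0, (fun _ => 0); split.
  split=> [|||k].
  - exact: homog0.
  - by rewrite hab !dH.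
  - by move=> k; apply: homog0.
  - by have [z' _ ->] := hbc k; rewrite !dH.
exists 0; first exact: homog0.
rewrite /massey_value cmul0l // scaler0 subr0 dH.
by apply: big1 => k _; apply: cmul0r.
Qed.

Lemma formal_no_nonvanishing_massey (K : fieldType) (C : cdga_data K) i j m p :
  formal C -> ~ has_nonvanishing_massey C i j m p.
Proof.
move=> [H [HH dH zz]] /(zigzag_has_nonvanishing_massey zz) [a [b [c [hdef []]]]].
exact: zero_differential_massey_vanishes.
Qed.

Section Poincare.
Variables (K : fieldType) (A : cdga_data K) (N : int) (alpha : A -> K).
Hypotheses (HA : is_cdga A) (PA : poincare A N alpha).

Lemma poincare_pairing_nonzero i (x : A) : homog i x -> x != 0 ->
  exists2 y : A, homog (N - i) y & alpha (cmul A x y) != 0.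
Proof.
case: PA => _ _ nondeg hx /eqP x_nz; apply: NNPP => no_y; apply: x_nz.
have [nondeg_i _] := nondeg i; apply: nondeg_i hx _ => y hy.
by apply/eqP/negPn/negP => hxy; apply: no_y; exists y.
Qed.

Lemma poincare_top_scalar (omega : A) :
  alpha omega = 1 -> homog N omega ->
  (forall x : A, homog 0 x -> exists c : K, x = c *: cone A) ->
  forall x : A, homog N x -> x = alpha x *: omega.
Proof.
case: PA => _ alpha_lin nondeg alpha_omega homega A0 x hx.
apply/eqP; rewrite -subr_eq0; apply/eqP.
apply: (nondeg N).1; first exact: (homogB HA hx (homogZ HA _ homega)).
move=> y; rewrite subrr => /A0 [c ->].
rewrite cmulZr // cmul1r // (lin_functionalZ alpha_lin) (lin_functionalB alpha_lin).
by rewrite (lin_functionalZ alpha_lin) alpha_omega mulr1 subrr mulr0.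
Qed.

End Poincare.

Section Atheta.
Variables (K : fieldType) (A : cdga_data K) (n : nat) (alpha : A -> K) (omega : A).
Hypotheses (HA : is_cdga A) (dA : forall x : A, cd A x = 0)
  (alpha_lin : lin_functional alpha) (alpha_omega : alpha omega = 1)
  (A_neg : forall (i : int) (x : A), i < 0 -> proj A i x = 0)
  (A0 : forall x : A, homog 0 x -> exists c : K, x = c *: cone A)
  (A_top : forall x : A, homog (2 * n)%:Z x -> x = alpha x *: omega).

Local Notation At := (Atheta_data A n omega).

Lemma Atheta_cd (u : At) : cd At u = (cmul A omega u.2, 0).
Proof. by case: u => x y; rewrite /= !dA add0r oppr0. Qed.

Lemma Atheta_coboundary_snd k (u : At) : coboundary k u -> u.2 = 0.
Proof. by move=> [z _ ->]; rewrite Atheta_cd. Qed.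

Lemma Atheta_sum (I : Type) (r : seq I) (F : I -> At) :
  \sum_(k <- r) F k = (\sum_(k <- r) (F k).1, \sum_(k <- r) (F k).2) :> At.
Proof. by elim/big_rec3: _ => // k x y z _ ->. Qed.

Lemma Atheta_homog k (x y : A) :
  homog k x -> homog (k - ((2 * n)%:Z - 1)) y -> homog k ((x, y) : At).
Proof. by rewrite /homog => hx hy; rewrite -[in RHS]hx -[in RHS]hy. Qed.

Lemma Atheta_homog_snd k (u : At) : homog k u -> homog (k - ((2 * n)%:Z - 1)) u.2.
Proof. by case: u => x y; rewrite /homog /= => -[]. Qed.

Lemma Atheta_cocycle_incl k (x : A) : homog k x -> cocycle k ((x, 0) : At).
Proof.
move=> hx; split; first exact: (Atheta_homog hx (homog0 HA _)).
by rewrite Atheta_cd cmul0r.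
Qed.

Lemma nonpos_homog_scalar d (y : A) : d <= 0 -> homog d y ->
  y = alpha (cmul A omega y) *: cone A.
Proof.
rewrite le_eqVlt => /orP[/eqP -> | d_neg] hy.
  have [c ->] := A0 hy.
  by rewrite cmulZr // cmul1r // (lin_functionalZ alpha_lin) alpha_omega mulr1.
by rewrite -hy A_neg // cmul0r // (lin_functional0 alpha_lin) scale0r.
Qed.

Lemma Atheta_has_nonvanishing_massey (i j : int) p (e b : 'I_p -> A) (g : A) (k0 : 'I_p) :
  i + j <= (2 * n)%:Z ->
  (forall k, homog i (e k)) ->
  (forall c : 'I_p -> K, \sum_k c k *: e k = 0 -> forall k, c k = 0) ->
  (forall k, homog j (b k)) -> \sum_k cmul A (e k) (b k) = 0 ->
  homog ((2 * n)%:Z - j) g -> alpha (cmul A (b k0) g) != 0 ->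
  has_nonvanishing_massey At i j ((2 * n)%:Z - j) p.
Proof.
move=> hij he e_free hb eb hg hbg0.
pose beta k := alpha (cmul A (b k) g).
have hbg k : homog (2 * n)%:Z (cmul A (b k) g) by apply: (homogM_eq HA (hb k) hg); ring.
exists (fun k => (e k, 0)), (fun k => (b k, 0)), (g, 0); split.
  split=> [k|k|||k].
  - exact: Atheta_cocycle_incl.
  - exact: Atheta_cocycle_incl.
  - exact: Atheta_cocycle_incl.
  - rewrite Atheta_sum /= eb big1 => [|k _]; last by rewrite cmul0r // cmul0l // addr0.
    exists 0; first exact: (Atheta_homog (homog0 HA _) (homog0 HA _)).
    by rewrite Atheta_cd cmul0r.
  - exists (0, beta k *: cone A).
      apply: (Atheta_homog (homog0 HA _)); apply/(homogZ HA)/(eq_homog _ (homog_cone HA)).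
      lia.
    by rewrite Atheta_cd /= cmulZr // cmul1r // -A_top // cmul0r // cmul0l // addr0.
move=> [u [v [[hu du hv dv] /Atheta_coboundary_snd]]].
have u2 : u.2 = 0.
  rewrite (nonpos_homog_scalar _ (Atheta_homog_snd hu)); last lia.
  have := congr1 fst du; rewrite Atheta_cd Atheta_sum /= => ->.
  by rewrite eb (lin_functional0 alpha_lin) scale0r.
have v2 k : (v k).2 = beta k *: cone A.
  rewrite (nonpos_homog_scalar _ (Atheta_homog_snd (hv k))); last lia.
  by have := congr1 fst (dv k); rewrite Atheta_cd /= => ->.
rewrite /massey_value Atheta_sum /= u2 cmul0r // !cmul0l // add0r scaler0 subr0.
under eq_bigr do rewrite v2 cmulZr // cmul1r // cmul0l // addr0.
by move=> /e_free/(_ k0)/eqP; apply/negP.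
Qed.

End Atheta.

Unset Implicit Arguments.

Theorem lemma3p7 (K : fieldType) (charK0 : [pchar K] =i pred0)
  (A : cdga_data K) (n : nat) (alpha : A -> K) (omega : A) :
  is_cdga A ->
  (forall x : A, cd A x = 0) ->
  poincare A (2 * n)%:Z alpha ->
  homog (2 * n)%:Z omega -> alpha omega = 1 ->
  (forall (i : int) (x : A), (i < 0) || odd `|i|%N -> proj A i x = 0) ->
  (forall x : A, homog 0 x -> exists c : K, x = c *: cone A) ->
  formal (Atheta_data A n omega) ->
  forall i j : nat, (i <= n)%N -> (j <= n)%N ->
    mul_tensor_injective A i%:Z j%:Z.
Proof.
move=> HA dA PA homega alpha_omega A_vanish A0 formalAt i j hi hj p q e f he hf M HM.
have [_ alpha_lin _] := PA.
have A_top := poincare_top_scalar HA PA alpha_omega homega A0.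
have A_neg (k : int) (x : A) : k < 0 -> proj A k x = 0.
  by move=> k_neg; apply: A_vanish; rewrite k_neg.
have [e_homog e_free _] := he.
have [f_homog f_free _] := hf.
apply/matrixP => k0 l0; rewrite mxE; apply/eqP/negPn/negP => M_nz.
pose b k := \sum_l M k l *: f l.
have hb k : homog j (b k) by apply: (homog_sum HA) => l; apply/(homogZ HA)/f_homog.
have b_nz : b k0 != 0 by apply: contra M_nz => /eqP/(f_free (M k0))/(_ l0)/eqP.
have eb : \sum_k cmul A (e k) (b k) = 0.
  rewrite -[RHS]HM; apply: eq_bigr => k _; rewrite cmul_sumr //.
  by apply: eq_bigr => l _; apply: cmulZr.
have [g hg hbg] := poincare_pairing_nonzero PA (hb k0) b_nz.
apply: (formal_no_nonvanishing_massey formalAt).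
apply: (Atheta_has_nonvanishing_massey HA dA alpha_lin alpha_omega A_neg A0 A_top _
          e_homog e_free hb eb hg hbg).
lia.
Qed.
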